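(* Let $(\mathcal C,\otimes,\mathbb I)$ be a monoidal category with pushouts and $(H,\Delta,\varepsilon)$ a coalgebra in $\mathcal C$. Every global $H$-comodule, viewed as a geometric partial comodule via $\mathcal I$, is globalizable; hence $\mathcal I:\mathsf{Com}^H\to\mathsf{PCom}^H$ corestricts to a fully faithful functor $\mathcal J:\mathsf{Com}^H\to\mathsf{PCom}^H_{gl}$. Moreover, the assignment $X\mapsto Y_X$, where $(Y_X,\kappa)$ is the equalizer in $\mathsf{Com}^H$ of the pair $\rho_X\otimes H,\ (\pi_X\otimes H)\circ(X\otimes\Delta):(X\otimes H,X\otimes\Delta)\to((X\bullet H)\otimes H,(X\bullet H)\otimes\Delta)$ (which exists for every globalizable $X$), extends to a functor $\mathcal G:\mathsf{PCom}^H_{gl}\to\mathsf{Com}^H$ which is right adjoint to $\mathcal J$.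
   Context: $\mathcal C$ is treated as strict monoidal; the identity of an object $X$ is also written $X$. $\mathsf{Com}^H$ is the category of right $H$-comodules $(Y,\delta)$. A partial comodule datum is $(X,X\bullet H,\pi_X,\rho_X)$ with $\rho_X:X\to X\bullet H$ and $\pi_X:X\otimes H\to X\bullet H$ an epimorphism. For such a datum let: $(X\bullet H)\bullet H$ be the pushout of $\pi_X$ and $\rho_X\otimes H$, with coprojections $\rho_X\bullet H$ and $\pi_{X\bullet H}:(X\bullet H)\otimes H\to(X\bullet H)\bullet H$; $X\bullet(H\otimes H)$ the pushout of $\pi_X$ and $X\otimes\Delta$, with coprojections $X\bullet\Delta:X\bullet H\to X\bullet(H\otimes H)$ and $\pi_{X,\Delta}:X\otimes H\otimes H\to X\bullet(H\otimes H)$; $X\bullet(H\bullet H)$ the pushout of $\pi_{X,\Delta}$ and $\pi_X\otimes H$, with coprojections $\pi'_X:X\bullet(H\otimes H)\to X\bullet(H\bullet H)$ and $\pi'_{X,\Delta}:(X\bullet H)\otimes H\to X\bullet(H\bullet H)$. A geometric partial $H$-comodule is a datum such that (GP1) there is $X\bullet\varepsilon:X\bullet H\to X$ with $(X\bullet\varepsilon)\circ\rho_X=\mathrm{id}_X$ and $(X\bullet\varepsilon)\circ\pi_X=X\otimes\varepsilon$; (GP2) there is an isomorphism $\theta:X\bullet(H\bullet H)\to(X\bullet H)\bullet H$ with $\theta\circ\pi'_{X,\Delta}=\pi_{X\bullet H}$ and $(\rho_X\bullet H)\circ\rho_X=\theta\circ\pi'_X\circ(X\bullet\Delta)\circ\rho_X$.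 Morphisms $X\to X'$ are pairs $(f,f\bullet H)$ with $\rho_{X'}\circ f=(f\bullet H)\circ\rho_X$ and $\pi_{X'}\circ(f\otimes H)=(f\bullet H)\circ\pi_X$; category $\mathsf{PCom}^H$. A global comodule $(Y,\delta)$ gives $\mathcal I(Y)=(Y,Y\otimes H,\mathrm{id},\delta)$, and $\mathcal I:\mathsf{Com}^H\to\mathsf{PCom}^H$ is a fully faithful functor; a morphism $\mathcal I(Y)\to X$ is a $g:Y\to X$ in $\mathcal C$ with $\pi_X\circ(g\otimes H)\circ\delta=\rho_X\circ g$. A globalization of $X$ is a global comodule $(Y,\delta)$ with $p:Y\to X$ in $\mathcal C$ such that (GL1) $p$ is a morphism $\mathcal I(Y)\to X$; (GL2) $X\bullet H$ with $\rho_X,\pi_X$ is a pushout of $p$ and $(p\otimes H)\circ\delta$; (GL3) for every global $(Z,\delta')$ and morphism $q:\mathcal I(Z)\to X$ there is a unique comodule morphism $\eta:Z\to Y$ with $p\circ\eta=q$. $\mathsf{PCom}^H_{gl}$ is the full subcategory of $\mathsf{PCom}^H$ of globalizable geometric partial comodules. *)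

Set Implicit Arguments.
Unset Strict Implicit.

Record Category := {
  Ob :> Type;
  Hom : Ob -> Ob -> Type;
  comp : forall A B D : Ob, Hom B D -> Hom A B -> Hom A D;
  idm : forall A : Ob, Hom A A;
  comp_assoc : forall (A B D E : Ob) (f : Hom A B) (g : Hom B D) (h : Hom D E),
      comp h (comp g f) = comp (comp h g) f;
  comp_id_l : forall (A B : Ob) (f : Hom A B), comp (idm B) f = f;
  comp_id_r : forall (A B : Ob) (f : Hom A B), comp f (idm A) = f
}.

Arguments Hom {c} A B.
Arguments comp {c A B D} g f.
Arguments idm {c} A.

Declare Scope cat_scope.
Delimit Scope cat_scope with cat.
Open Scope cat_scope.
Notation "g ∘ f" := (comp g f) (at level 40, left associativity) : cat_scope.

Definition Epi {C : Category} {A B : C} (f : Hom A B) : Prop :=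
  forall (Z : C) (u v : Hom B Z), u ∘ f = v ∘ f -> u = v.

Definition IsIso {C : Category} {A B : C} (f : Hom A B) : Prop :=
  exists g : Hom B A, g ∘ f = idm A /\ f ∘ g = idm B.

Definition IsPushout {C : Category} {A B D P : C}
    (f : Hom A B) (g : Hom A D) (i1 : Hom B P) (i2 : Hom D P) : Prop :=
  i1 ∘ f = i2 ∘ g /\
  forall (Q : C) (u : Hom B Q) (v : Hom D Q), u ∘ f = v ∘ g ->
    exists h : Hom P Q, (h ∘ i1 = u /\ h ∘ i2 = v) /\
      forall h' : Hom P Q, h' ∘ i1 = u -> h' ∘ i2 = v -> h' = h.

Record Pushouts (C : Category) := {
  po : forall (A B D : C), Hom A B -> Hom A D -> C;
  po_in1 : forall (A B D : C) (f : Hom A B) (g : Hom A D), Hom B (po f g);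
  po_in2 : forall (A B D : C) (f : Hom A B) (g : Hom A D), Hom D (po f g);
  po_isPushout : forall (A B D : C) (f : Hom A B) (g : Hom A D),
      IsPushout f g (po_in1 f g) (po_in2 f g)
}.

Arguments po {C} p {A B D} f g.
Arguments po_in1 {C} p {A B D} f g.
Arguments po_in2 {C} p {A B D} f g.

(* Monoidal categories (with associator and unitors; by coherence this is
   equivalent to the paper's strict treatment)                           *)

Record Monoidal (C : Category) := {
  tens : C -> C -> C;
  tensM : forall (A B A' B' : C), Hom A B -> Hom A' B' -> Hom (tens A A') (tens B B');
  tens_id : forall (A B : C), tensM (idm A) (idm B) = idm (tens A B);
  tens_comp : forall (A B D A' B' D' : C) (f : Hom A B) (g : Hom B D)
      (f' : Hom A' B') (g' : Hom B' D'),
      tensM (g ∘ f) (g' ∘ f') = tensM g g' ∘ tensM f f';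
  unitO : C;
  assoc : forall (A B D : C), Hom (tens (tens A B) D) (tens A (tens B D));
  assoc_inv : forall (A B D : C), Hom (tens A (tens B D)) (tens (tens A B) D);
  assoc_iso1 : forall (A B D : C), assoc_inv A B D ∘ assoc A B D = idm _;
  assoc_iso2 : forall (A B D : C), assoc A B D ∘ assoc_inv A B D = idm _;
  assoc_nat : forall (A B D A' B' D' : C) (f : Hom A A') (g : Hom B B') (h : Hom D D'),
      assoc A' B' D' ∘ tensM (tensM f g) h = tensM f (tensM g h) ∘ assoc A B D;
  lunit : forall (A : C), Hom (tens unitO A) A;
  lunit_inv : forall (A : C), Hom A (tens unitO A);
  lunit_iso1 : forall (A : C), lunit_inv A ∘ lunit A = idm _;
  lunit_iso2 : forall (A : C), lunit A ∘ lunit_inv A = idm _;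
  lunit_nat : forall (A B : C) (f : Hom A B),
      lunit B ∘ tensM (idm unitO) f = f ∘ lunit A;
  runit : forall (A : C), Hom (tens A unitO) A;
  runit_inv : forall (A : C), Hom A (tens A unitO);
  runit_iso1 : forall (A : C), runit_inv A ∘ runit A = idm _;
  runit_iso2 : forall (A : C), runit A ∘ runit_inv A = idm _;
  runit_nat : forall (A B : C) (f : Hom A B),
      runit B ∘ tensM f (idm unitO) = f ∘ runit A;
  pentagon : forall (A B D E : C),
      tensM (idm A) (assoc B D E) ∘ assoc A (tens B D) E ∘ tensM (assoc A B D) (idm E)
      = assoc A B (tens D E) ∘ assoc (tens A B) D E;
  triangle : forall (A B : C),
      tensM (idm A) (lunit B) ∘ assoc A unitO B = tensM (runit A) (idm B)
}.

Arguments tens {C} m A B.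
Arguments tensM {C} m {A B A' B'} f g.
Arguments unitO {C} m.
Arguments assoc {C} m A B D.
Arguments assoc_inv {C} m A B D.
Arguments lunit {C} m A.
Arguments runit {C} m A.

Section PartialComodules.

Variables (C : Category) (M : Monoidal C) (PO : Pushouts C) (H : C)
  (Δ : Hom H (tens M H H)) (ε : Hom H (unitO M)).

Local Notation "A ⊗ B" := (tens M A B) (at level 35).
Local Notation "f ⊗m g" := (tensM M f g) (at level 35).

Definition IsCoalgebra : Prop :=
  assoc M H H H ∘ (Δ ⊗m idm H) ∘ Δ = (idm H ⊗m Δ) ∘ Δ /\
  lunit M H ∘ (ε ⊗m idm H) ∘ Δ = idm H /\
  runit M H ∘ (idm H ⊗m ε) ∘ Δ = idm H.

Record Comod := {
  cY : C;
  coact : Hom cY (cY ⊗ H);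
  coact_coassoc : assoc M cY H H ∘ (coact ⊗m idm H) ∘ coact = (idm cY ⊗m Δ) ∘ coact;
  coact_counit : runit M cY ∘ (idm cY ⊗m ε) ∘ coact = idm cY
}.

Record ComodHom (Y Y' : Comod) := {
  cf : Hom (cY Y) (cY Y');
  cf_law : coact Y' ∘ cf = (cf ⊗m idm H) ∘ coact Y
}.

Record PDatum := {
  pX : C;
  pXH : C;
  ppi : Hom (pX ⊗ H) pXH;
  prho : Hom pX pXH;
  ppi_epi : Epi ppi
}.

Section Geometric.
Variable X : PDatum.

Definition XHH : C := po PO (ppi X) (prho X ⊗m idm H).
Definition rhoH : Hom (pXH X) XHH := po_in1 PO (ppi X) (prho X ⊗m idm H).
Definition piXH : Hom (pXH X ⊗ H) XHH := po_in2 PO (ppi X) (prho X ⊗m idm H).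

Definition XdHtH : C := po PO (ppi X) (idm (pX X) ⊗m Δ).
Definition XdDelta : Hom (pXH X) XdHtH := po_in1 PO (ppi X) (idm (pX X) ⊗m Δ).
Definition piXDelta : Hom (pX X ⊗ (H ⊗ H)) XdHtH := po_in2 PO (ppi X) (idm (pX X) ⊗m Δ).

(* X•(H•H) : pushout of π_{X,Δ} (precomposed with the associator
   (X⊗H)⊗H -> X⊗(H⊗H)) and π_X ⊗ H *)
Definition XdHdH : C := po PO (piXDelta ∘ assoc M (pX X) H H) (ppi X ⊗m idm H).
Definition piX' : Hom XdHtH XdHdH :=
  po_in1 PO (piXDelta ∘ assoc M (pX X) H H) (ppi X ⊗m idm H).
Definition piXDelta' : Hom (pXH X ⊗ H) XdHdH :=
  po_in2 PO (piXDelta ∘ assoc M (pX X) H H) (ppi X ⊗m idm H).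

Definition GP1 : Prop :=
  exists e : Hom (pXH X) (pX X),
    e ∘ prho X = idm (pX X) /\ e ∘ ppi X = runit M (pX X) ∘ (idm (pX X) ⊗m ε).

Definition GP2 : Prop :=
  exists θ : Hom XdHdH XHH,
    IsIso θ /\ θ ∘ piXDelta' = piXH /\
    rhoH ∘ prho X = θ ∘ piX' ∘ XdDelta ∘ prho X.

Definition Geometric : Prop := GP1 /\ GP2.

End Geometric.

Record PHom (X X' : PDatum) := {
  pf : Hom (pX X) (pX X');
  pfH : Hom (pXH X) (pXH X');
  pf_rho : prho X' ∘ pf = pfH ∘ prho X;
  pf_pi : ppi X' ∘ (pf ⊗m idm H) = pfH ∘ ppi X
}.

Definition PHom_eq (X X' : PDatum) (f g : PHom X X') : Prop :=
  pf f = pf g /\ pfH f = pfH g.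

Lemma PHom_id_proof1 (X : PDatum) :
  prho X ∘ idm (pX X) = idm (pXH X) ∘ prho X.
Proof. rewrite comp_id_l, comp_id_r; reflexivity. Qed.

Lemma PHom_id_proof2 (X : PDatum) :
  ppi X ∘ (idm (pX X) ⊗m idm H) = idm (pXH X) ∘ ppi X.
Proof. rewrite tens_id, comp_id_l, comp_id_r; reflexivity. Qed.

Definition pid (X : PDatum) : PHom X X :=
  {| pf := idm (pX X); pfH := idm (pXH X);
     pf_rho := PHom_id_proof1 X; pf_pi := PHom_id_proof2 X |}.

Lemma pcomp_proof1 (X X' X'' : PDatum) (g : PHom X' X'') (f : PHom X X') :
  prho X'' ∘ (pf g ∘ pf f) = (pfH g ∘ pfH f) ∘ prho X.
Proof.
  rewrite comp_assoc, (pf_rho g), <- comp_assoc, (pf_rho f), comp_assoc.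
  reflexivity.
Qed.

Lemma pcomp_proof2 (X X' X'' : PDatum) (g : PHom X' X'') (f : PHom X X') :
  ppi X'' ∘ ((pf g ∘ pf f) ⊗m idm H) = (pfH g ∘ pfH f) ∘ ppi X.
Proof.
  rewrite <- (comp_id_l (idm H)).
  rewrite tens_comp, comp_assoc, (pf_pi g), <- comp_assoc, (pf_pi f), comp_assoc.
  reflexivity.
Qed.

Definition pcomp (X X' X'' : PDatum) (g : PHom X' X'') (f : PHom X X') : PHom X X'' :=
  {| pf := pf g ∘ pf f; pfH := pfH g ∘ pfH f;
     pf_rho := pcomp_proof1 g f; pf_pi := pcomp_proof2 g f |}.

Lemma idm_epi (A : C) : Epi (idm A).
Proof. intros Z u v E; rewrite !comp_id_r in E; exact E. Qed.

Definition Iobj (Y : Comod) : PDatum :=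
  {| pX := cY Y; pXH := cY Y ⊗ H; ppi := idm (cY Y ⊗ H); prho := coact Y;
     ppi_epi := @idm_epi (cY Y ⊗ H) |}.

Lemma Imor_proof2 (Y Y' : Comod) (g : ComodHom Y Y') :
  idm (cY Y' ⊗ H) ∘ (cf g ⊗m idm H) = (cf g ⊗m idm H) ∘ idm (cY Y ⊗ H).
Proof. rewrite comp_id_l, comp_id_r; reflexivity. Qed.

Definition Imor (Y Y' : Comod) (g : ComodHom Y Y') : PHom (Iobj Y) (Iobj Y') :=
  @Build_PHom (Iobj Y) (Iobj Y') (cf g) (cf g ⊗m idm H) (cf_law g) (Imor_proof2 g).

(* A morphism I(Y) -> X is a g : Y -> X with π_X ∘ (g⊗H) ∘ δ = ρ_X ∘ g *)
Definition MorIX (Y : Comod) (X : PDatum) (g : Hom (cY Y) (pX X)) : Prop :=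
  ppi X ∘ (g ⊗m idm H) ∘ coact Y = prho X ∘ g.
Arguments MorIX : clear implicits.

Definition IsGlobalization (X : PDatum) (Y : Comod) (p : Hom (cY Y) (pX X)) : Prop :=
  MorIX Y X p /\
  IsPushout p ((p ⊗m idm H) ∘ coact Y) (prho X) (ppi X) /\
  (forall (Z : Comod) (q : Hom (cY Z) (pX X)), MorIX Z X q ->
     exists η : ComodHom Z Y, p ∘ cf η = q /\
       forall η' : ComodHom Z Y, p ∘ cf η' = q -> cf η' = cf η).
Arguments IsGlobalization : clear implicits.

Definition Globalizable (X : PDatum) : Prop :=
  exists (Y : Comod) (p : Hom (cY Y) (pX X)), IsGlobalization X Y p.

Record GlObj := {
  gobj :> PDatum;
  gl_geometric : Geometric gobj;
  gl_globalizable : Globalizable gobj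
}.

(* (E, κ) is an equalizer in Com^H of u, v : (T, dT) -> S  (only the
   comodule structure dT of the source enters the universal property) *)
Definition IsComEqualizer (T S : C) (dT : Hom T (T ⊗ H)) (u v : Hom T S)
    (E : Comod) (κ : Hom (cY E) T) : Prop :=
  dT ∘ κ = (κ ⊗m idm H) ∘ coact E /\
  u ∘ κ = v ∘ κ /\
  forall (Z : Comod) (h : Hom (cY Z) T),
    dT ∘ h = (h ⊗m idm H) ∘ coact Z -> u ∘ h = v ∘ h ->
    exists η : ComodHom Z E, κ ∘ cf η = h /\
      forall η' : ComodHom Z E, κ ∘ cf η' = h -> cf η' = cf η.

Definition coactXH (X : PDatum) : Hom (pX X ⊗ H) ((pX X ⊗ H) ⊗ H) :=
  assoc_inv M (pX X) H H ∘ (idm (pX X) ⊗m Δ).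

Definition eqPair1 (X : PDatum) : Hom (pX X ⊗ H) (pXH X ⊗ H) :=
  prho X ⊗m idm H.

Definition eqPair2 (X : PDatum) : Hom (pX X ⊗ H) (pXH X ⊗ H) :=
  (ppi X ⊗m idm H) ∘ assoc_inv M (pX X) H H ∘ (idm (pX X) ⊗m Δ).

End PartialComodules.

(* For a global comodule Y the map π of I(Y) is an identity, so every pushout in
   (GP2) is taken along an isomorphism, and (Y, id) is a globalization of I(Y).

   Maps a : Z -> W from a comodule correspond to comodule maps Z -> W ⊗ H into the
   cofree comodule, via a ↦ (a ⊗ H) ∘ δ_Z, and such a transpose equalizes ρ_X ⊗ H and
   (π_X ⊗ H) ∘ (X ⊗ Δ) exactly when a is a morphism I(Z) -> X.  Hence (GL3) for a
   globalization p : Y_X -> X says that (p ⊗ H) ∘ δ is the equalizer, and, read through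
   the bijection between morphisms I(Z) -> X and such maps a, it is also the universal
   property of p as the counit J(Y_X) -> X of the adjunction J ⊣ G. *)
From Stdlib Require Import ClassicalEpsilon.
Set Implicit Arguments.
Unset Strict Implicit.

Section CategoryFacts.
Variable C : Category.

Lemma comp_precompose_eq (A B D E : C) (a : Hom D E) (b : Hom B D) (c : Hom B E)
    (x : Hom A B) :
  a ∘ b = c -> a ∘ (b ∘ x) = c ∘ x.
Proof. intros <-; apply comp_assoc. Qed.

Lemma iso_idm (A : C) : IsIso (idm A).
Proof. exists (idm A). split; apply comp_id_l. Qed.

Lemma iso_comp (A B D : C) (f : Hom A B) (g : Hom B D) :
  IsIso f -> IsIso g -> IsIso (g ∘ f).
Proof.
  intros [f' [Ff1 Ff2]] [g' [Gg1 Gg2]]. exists (f' ∘ g'). split.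
  - rewrite <- comp_assoc, (comp_precompose_eq f Gg1), comp_id_l; exact Ff1.
  - rewrite <- comp_assoc, (comp_precompose_eq g' Ff2), comp_id_l; exact Gg2.
Qed.

Lemma pushout_iso_leg (A B D P : C) (f : Hom A B) (g : Hom A D)
    (i1 : Hom B P) (i2 : Hom D P) :
  IsPushout f g i1 i2 -> IsIso f -> IsIso i2.
Proof.
  intros [Hsq U] [f' [Ff1 Ff2]].
  destruct (U D (g ∘ f') (idm D)) as [h [[Hh1 Hh2] _]].
  { rewrite <- comp_assoc, Ff1, comp_id_r, comp_id_l. reflexivity. }
  exists h. split; [exact Hh2|].
  destruct (U P i1 i2 Hsq) as [k [_ Uk]].
  transitivity k; [apply Uk | symmetry; apply Uk; apply comp_id_l].
  - rewrite <- comp_assoc, Hh1, comp_assoc, <- Hsq, <- comp_assoc, Ff2, comp_id_r.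
    reflexivity.
  - rewrite <- comp_assoc, Hh2. apply comp_id_r.
Qed.

Lemma pushout_along_idm (A D : C) (g : Hom A D) : IsPushout (idm A) g g (idm D).
Proof.
  split; [rewrite comp_id_l; apply comp_id_r|].
  intros Q u v Huv. rewrite comp_id_r in Huv. exists v.
  split; [split; [symmetry; exact Huv | apply comp_id_r]|].
  intros h' _ Hh'. rewrite comp_id_r in Hh'. exact Hh'.
Qed.

End CategoryFacts.

Section MonoidalFacts.
Variables (C : Category) (M : Monoidal C).
Local Notation "f ⊗m g" := (tensM M f g) (at level 35).

Lemma tensor_comp_l (A B D X : C) (f : Hom A B) (g : Hom B D) :
  (g ∘ f) ⊗m idm X = (g ⊗m idm X) ∘ (f ⊗m idm X).
Proof. rewrite <- tens_comp, comp_id_l; reflexivity. Qed.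

Lemma tensor_comp_r (A B D X : C) (f : Hom A B) (g : Hom B D) :
  idm X ⊗m (g ∘ f) = (idm X ⊗m g) ∘ (idm X ⊗m f).
Proof. rewrite <- tens_comp, comp_id_l; reflexivity. Qed.

Lemma tensor_interchange (A B A' B' : C) (f : Hom A B) (g : Hom A' B') :
  (f ⊗m idm B') ∘ (idm A ⊗m g) = (idm B ⊗m g) ∘ (f ⊗m idm A').
Proof. rewrite <- !tens_comp, !comp_id_l, !comp_id_r; reflexivity. Qed.

Lemma assoc_inv_nat (A B D A' B' D' : C) (f : Hom A A') (g : Hom B B') (h : Hom D D') :
  assoc_inv M A' B' D' ∘ (f ⊗m (g ⊗m h)) = ((f ⊗m g) ⊗m h) ∘ assoc_inv M A B D.
Proof.
  rewrite <- (comp_id_r (assoc_inv M A' B' D' ∘ _)), <- (assoc_iso2 M A B D).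
  rewrite comp_assoc, <- (comp_assoc (assoc M A B D)), <- assoc_nat.
  rewrite (comp_assoc _ (assoc M A' B' D')), assoc_iso1, comp_id_l. reflexivity.
Qed.

Lemma assoc_is_iso (A B D : C) : IsIso (assoc M A B D).
Proof. exists (assoc_inv M A B D). split; [apply assoc_iso1 | apply assoc_iso2]. Qed.

Lemma triangle_inv (A B : C) :
  (runit M A ⊗m idm B) ∘ assoc_inv M A (unitO M) B = idm A ⊗m lunit M B.
Proof. rewrite <- triangle, <- comp_assoc, assoc_iso2, comp_id_r; reflexivity. Qed.

End MonoidalFacts.

Section CofreeComodule.
Variables (C : Category) (M : Monoidal C) (H : C)
  (Δ : Hom H (tens M H H)) (ε : Hom H (unitO M)).
Local Notation "A ⊗ B" := (tens M A B) (at level 35).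
Local Notation "f ⊗m g" := (tensM M f g) (at level 35).

Definition rcounit (A : C) : Hom (A ⊗ H) A := runit M A ∘ (idm A ⊗m ε).

Definition cofree_coact (A : C) : Hom (A ⊗ H) ((A ⊗ H) ⊗ H) :=
  assoc_inv M A H H ∘ (idm A ⊗m Δ).

Definition cofree_ext (Z : Comod Δ ε) (W : C) (a : Hom (cY Z) W) : Hom (cY Z) (W ⊗ H) :=
  (a ⊗m idm H) ∘ coact Z.

Lemma rcounit_cofree_ext (Z : Comod Δ ε) (W : C) (a : Hom (cY Z) W) :
  rcounit W ∘ cofree_ext a = a.
Proof.
  unfold rcounit, cofree_ext.
  rewrite <- !comp_assoc, (comp_precompose_eq _ (eq_sym (tensor_interchange M a ε))).
  rewrite <- !comp_assoc, (comp_precompose_eq _ (runit_nat M a)), <- !comp_assoc.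
  rewrite (comp_assoc (coact Z)), coact_counit. apply comp_id_r.
Qed.

Lemma cofree_ext_inj (Z : Comod Δ ε) (W : C) (a b : Hom (cY Z) W) :
  cofree_ext a = cofree_ext b -> a = b.
Proof. intro E. rewrite <- (rcounit_cofree_ext a), E. apply rcounit_cofree_ext. Qed.

Lemma tensor_cofree_ext (Z : Comod Δ ε) (W W' : C) (a : Hom (cY Z) W) (g : Hom W W') :
  (g ⊗m idm H) ∘ cofree_ext a = cofree_ext (g ∘ a).
Proof. unfold cofree_ext. rewrite tensor_comp_l. apply comp_assoc. Qed.

Lemma cofree_ext_comp (Y Z : Comod Δ ε) (W : C) (p : Hom (cY Y) W) (η : ComodHom Z Y) :
  cofree_ext p ∘ cf η = cofree_ext (p ∘ cf η).
Proof.
  unfold cofree_ext. rewrite <- comp_assoc, cf_law, comp_assoc, <- tensor_comp_l.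
  reflexivity.
Qed.

Lemma cofree_coact_nat (A B : C) (a : Hom A B) :
  cofree_coact B ∘ (a ⊗m idm H) = ((a ⊗m idm H) ⊗m idm H) ∘ cofree_coact A.
Proof.
  unfold cofree_coact. rewrite <- comp_assoc, <- tensor_interchange, comp_assoc.
  rewrite <- (tens_id M H H), assoc_inv_nat. apply eq_sym, comp_assoc.
Qed.

Lemma cofree_coact_coact (Y : Comod Δ ε) :
  cofree_coact (cY Y) ∘ coact Y = (coact Y ⊗m idm H) ∘ coact Y.
Proof.
  unfold cofree_coact. rewrite <- comp_assoc, <- coact_coassoc, !comp_assoc.
  rewrite assoc_iso1, comp_id_l. reflexivity.
Qed.

Lemma cofree_ext_comod (Z : Comod Δ ε) (W : C) (a : Hom (cY Z) W) :
  cofree_coact W ∘ cofree_ext a = (cofree_ext a ⊗m idm H) ∘ coact Z.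
Proof.
  unfold cofree_ext. rewrite comp_assoc, cofree_coact_nat, <- comp_assoc.
  rewrite cofree_coact_coact, comp_assoc, <- tensor_comp_l. reflexivity.
Qed.

Hypothesis counit_l : lunit M H ∘ (ε ⊗m idm H) ∘ Δ = idm H.

Lemma rcounit_cofree_coact (A : C) :
  (rcounit A ⊗m idm H) ∘ cofree_coact A = idm (A ⊗ H).
Proof.
  unfold rcounit, cofree_coact. rewrite tensor_comp_l, <- !comp_assoc.
  rewrite (comp_precompose_eq _ (eq_sym (assoc_inv_nat M (idm A) ε (idm H)))).
  rewrite <- !comp_assoc, (comp_precompose_eq _ (triangle_inv M A H)).
  rewrite <- !tensor_comp_r, comp_assoc, counit_l. apply tens_id.
Qed.

Lemma cofree_ext_rcounit (Z : Comod Δ ε) (A : C) (h : Hom (cY Z) (A ⊗ H)) :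
  cofree_coact A ∘ h = (h ⊗m idm H) ∘ coact Z -> cofree_ext (rcounit A ∘ h) = h.
Proof.
  intro Hh. unfold cofree_ext.
  rewrite tensor_comp_l, <- comp_assoc, <- Hh, comp_assoc, rcounit_cofree_coact.
  apply comp_id_l.
Qed.

Lemma comod_id_law (Y : Comod Δ ε) : coact Y ∘ idm (cY Y) = (idm (cY Y) ⊗m idm H) ∘ coact Y.
Proof. rewrite tens_id, comp_id_l, comp_id_r. reflexivity. Qed.

Definition comod_id (Y : Comod Δ ε) : ComodHom Y Y := Build_ComodHom (comod_id_law Y).

Lemma comod_comp_law (Y1 Y2 Y3 : Comod Δ ε) (g : ComodHom Y2 Y3) (f : ComodHom Y1 Y2) :
  coact Y3 ∘ (cf g ∘ cf f) = ((cf g ∘ cf f) ⊗m idm H) ∘ coact Y1.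
Proof.
  rewrite comp_assoc, cf_law, <- comp_assoc, cf_law, tensor_comp_l, comp_assoc.
  reflexivity.
Qed.

Definition comod_comp (Y1 Y2 Y3 : Comod Δ ε) (g : ComodHom Y2 Y3) (f : ComodHom Y1 Y2) :
  ComodHom Y1 Y3 := Build_ComodHom (comod_comp_law g f).

End CofreeComodule.

Section PartialComodules.
Variables (C : Category) (M : Monoidal C) (PO : Pushouts C) (H : C)
  (Δ : Hom H (tens M H H)) (ε : Hom H (unitO M)).
Local Notation "f ⊗m g" := (tensM M f g) (at level 35).

Lemma MorIX_iff (X : PDatum M H) (Z : Comod Δ ε) (q : Hom (cY Z) (pX X)) :
  MorIX (Y:=Z) (X:=X) q <-> ppi X ∘ cofree_ext q = prho X ∘ q.
Proof. unfold MorIX, cofree_ext. rewrite comp_assoc. reflexivity. Qed.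

Lemma eqPair2_cofree_ext (X : PDatum M H) (Z : Comod Δ ε) (q : Hom (cY Z) (pX X)) :
  eqPair2 Δ X ∘ cofree_ext q = cofree_ext (ppi X ∘ cofree_ext q).
Proof.
  unfold eqPair2. rewrite <- !comp_assoc, (comp_assoc (cofree_ext q)).
  fold (cofree_coact Δ (pX X)). rewrite cofree_ext_comod. apply tensor_cofree_ext.
Qed.

Lemma eqPair_cofree_ext_iff (X : PDatum M H) (Z : Comod Δ ε) (q : Hom (cY Z) (pX X)) :
  eqPair1 X ∘ cofree_ext q = eqPair2 Δ X ∘ cofree_ext q <-> MorIX (Y:=Z) (X:=X) q.
Proof.
  unfold eqPair1. rewrite MorIX_iff, eqPair2_cofree_ext, tensor_cofree_ext. split.
  - intro E. symmetry. exact (cofree_ext_inj E).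
  - intros ->. reflexivity.
Qed.

Hypothesis counit_l : lunit M H ∘ (ε ⊗m idm H) ∘ Δ = idm H.

Lemma globalization_is_equalizer (X : PDatum M H) (Y : Comod Δ ε) (p : Hom (cY Y) (pX X)) :
  IsGlobalization (X:=X) (Y:=Y) p ->
  IsComEqualizer (coactXH Δ X) (eqPair1 X) (eqPair2 Δ X) (cofree_ext p).
Proof.
  intros [Hp [_ Huniv]]. split; [|split].
  - apply cofree_ext_comod.
  - apply eqPair_cofree_ext_iff, Hp.
  - intros Z h Hcomod Heq.
    pose proof (cofree_ext_rcounit counit_l Hcomod) as Hh.
    rewrite <- Hh in Heq. apply eqPair_cofree_ext_iff in Heq.
    destruct (Huniv Z _ Heq) as [η [Hη Hη_uniq]].
    exists η. split.
    + rewrite cofree_ext_comp, Hη. exact Hh.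
    + intros η' Hη'. apply Hη_uniq.
      rewrite <- Hη', cofree_ext_comp, rcounit_cofree_ext. reflexivity.
Qed.

Lemma XHH_pushout (X : PDatum M H) :
  IsPushout (ppi X) (prho X ⊗m idm H) (rhoH PO X) (piXH PO X).
Proof. apply po_isPushout. Qed.

Lemma XdHtH_pushout (X : PDatum M H) :
  IsPushout (ppi X) (idm (pX X) ⊗m Δ) (XdDelta PO Δ X) (piXDelta PO Δ X).
Proof. apply po_isPushout. Qed.

Lemma XdHdH_pushout (X : PDatum M H) :
  IsPushout (piXDelta PO Δ X ∘ assoc M (pX X) H H) (ppi X ⊗m idm H)
    (piX' PO Δ X) (piXDelta' PO Δ X).
Proof. apply po_isPushout. Qed.

Lemma Iobj_GP1 (Y : Comod Δ ε) : GP1 ε (Iobj Y).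
Proof. exists (rcounit ε (cY Y)). split; [apply coact_counit | apply comp_id_r]. Qed.

(* [θ] is [piXH] composed with the inverse of [piXDelta']: since [π] is an identity,
   all three pushouts are taken along isomorphisms, so their second legs are invertible. *)
Lemma Iobj_GP2 (Y : Comod Δ ε) : GP2 PO Δ (Iobj Y).
Proof.
  set (X := Iobj Y).
  pose proof (XHH_pushout X) as P1. pose proof (XdHtH_pushout X) as P2.
  pose proof (XdHdH_pushout X) as P3.
  assert (I1 : IsIso (piXH PO X)) by exact (pushout_iso_leg P1 (iso_idm _)).
  assert (I2 : IsIso (piXDelta PO Δ X)) by exact (pushout_iso_leg P2 (iso_idm _)).
  assert (I3 : IsIso (piXDelta' PO Δ X)).
  { apply (pushout_iso_leg P3), iso_comp; [apply assoc_is_iso | exact I2]. }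
  destruct I3 as [j [Hj1 Hj2]].
  assert (Htheta : piXH PO X ∘ j ∘ piXDelta' PO Δ X = piXH PO X).
  { rewrite <- comp_assoc, Hj1. apply comp_id_r. }
  assert (Hsq3 : piX' PO Δ X ∘ piXDelta PO Δ X = piXDelta' PO Δ X ∘ assoc_inv M _ H H).
  { destruct P3 as [c3 _]. rewrite tens_id, comp_id_r in c3.
    rewrite <- c3, <- !comp_assoc, assoc_iso2, comp_id_r. reflexivity. }
  exists (piXH PO X ∘ j). split; [|split; [exact Htheta|]].
  - apply iso_comp; [exists (piXDelta' PO Δ X); split; assumption | exact I1].
  - destruct P1 as [c1 _]. destruct P2 as [c2 _].
    change (rhoH PO X ∘ idm _ = piXH PO X ∘ (coact Y ⊗m idm H)) in c1.
    change (XdDelta PO Δ X ∘ idm _ = piXDelta PO Δ X ∘ (idm _ ⊗m Δ)) in c2.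
    rewrite comp_id_r in c1, c2. cbn [X Iobj prho].
    rewrite c1, c2, <- !comp_assoc, (comp_precompose_eq _ Hsq3), !comp_assoc, Htheta.
    unfold X; cbn [Iobj pX]. rewrite <- comp_assoc, <- cofree_coact_coact.
    unfold cofree_coact. rewrite <- !comp_assoc. reflexivity.
Qed.

Lemma Iobj_globalizable (Y : Comod Δ ε) : Globalizable Δ ε (Iobj Y).
Proof.
  exists Y, (idm (cY Y)). split; [|split].
  - unfold MorIX; cbn. rewrite tens_id, !comp_id_l. apply eq_sym, comp_id_r.
  - cbn. rewrite tens_id, comp_id_l. apply pushout_along_idm.
  - intros Z q Hq. unfold MorIX in Hq; cbn in Hq. rewrite comp_id_l in Hq.
    exists (Build_ComodHom (eq_sym Hq)). cbn. split; [apply comp_id_l|].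
    intros η' Hη'. rewrite comp_id_l in Hη'. exact Hη'.
Qed.

Lemma Iobj_geometric (Y : Comod Δ ε) : Geometric PO Δ ε (Iobj Y).
Proof. split; [apply Iobj_GP1 | apply Iobj_GP2]. Qed.

Lemma Iobj_full (Y Y' : Comod Δ ε) (f : PHom (Iobj Y) (Iobj Y')) :
  exists g : ComodHom Y Y', PHom_eq (Imor g) f.
Proof.
  pose proof (pf_pi f) as Hpi. pose proof (pf_rho f) as Hrho. cbn in Hpi, Hrho.
  rewrite comp_id_l, comp_id_r in Hpi. rewrite <- Hpi in Hrho.
  exists (Build_ComodHom Hrho). split; [reflexivity | exact Hpi].
Qed.

Lemma MorIX_postcomp (X X' : PDatum M H) (f : PHom X X') (Y : Comod Δ ε)
    (p : Hom (cY Y) (pX X)) :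
  MorIX (Y:=Y) (X:=X) p -> MorIX (Y:=Y) (X:=X') (pf f ∘ p).
Proof.
  rewrite !MorIX_iff. intro Hp.
  rewrite <- tensor_cofree_ext, comp_assoc, pf_pi, <- comp_assoc, Hp.
  rewrite (comp_assoc p (prho X) (pfH f)), <- pf_rho. apply eq_sym, comp_assoc.
Qed.

Lemma MorIX_of_PHom (X : PDatum M H) (Y : Comod Δ ε) (f : PHom (Iobj Y) X) :
  MorIX (Y:=Y) (X:=X) (pf f).
Proof.
  unfold MorIX. pose proof (pf_pi f) as Hpi. cbn in Hpi.
  rewrite Hpi, comp_id_r. exact (eq_sym (pf_rho f)).
Qed.

Lemma PHom_of_MorIX_rho (X : PDatum M H) (Y : Comod Δ ε) (p : Hom (cY Y) (pX X))
    (Hp : MorIX (Y:=Y) (X:=X) p) :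
  prho X ∘ p = (ppi X ∘ (p ⊗m idm H)) ∘ prho (Iobj Y).
Proof. symmetry. exact Hp. Qed.

Lemma PHom_of_MorIX_pi (X : PDatum M H) (Y : Comod Δ ε) (p : Hom (cY Y) (pX X)) :
  ppi X ∘ (p ⊗m idm H) = (ppi X ∘ (p ⊗m idm H)) ∘ ppi (Iobj Y).
Proof. symmetry. apply comp_id_r. Qed.

Definition PHom_of_MorIX (X : PDatum M H) (Y : Comod Δ ε) (p : Hom (cY Y) (pX X))
    (Hp : MorIX (Y:=Y) (X:=X) p) : PHom (Iobj Y) X :=
  Build_PHom (X:=Iobj Y) (X':=X) (PHom_of_MorIX_rho Hp) (PHom_of_MorIX_pi (X:=X) (Y:=Y) p).

Lemma PHom_of_MorIX_comp (X : PDatum M H) (Y Z : Comod Δ ε) (p : Hom (cY Y) (pX X))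
    (Hp : MorIX (Y:=Y) (X:=X) p) (g : ComodHom Z Y) (f : PHom (Iobj Z) X) :
  p ∘ cf g = pf f -> PHom_eq (pcomp (PHom_of_MorIX Hp) (Imor g)) f.
Proof.
  intro Hpg. split; [exact Hpg|]. pose proof (pf_pi f) as Hpi. cbn in *.
  rewrite <- comp_assoc, <- tensor_comp_l, Hpg, Hpi. apply comp_id_r.
Qed.

Record Globalization (X : PDatum M H) := {
  glob_comod : Comod Δ ε;
  glob_proj : Hom (cY glob_comod) (pX X);
  glob_spec : IsGlobalization (X:=X) (Y:=glob_comod) glob_proj
}.

Definition choose_globalization (X : PDatum M H) (HX : Globalizable Δ ε X) :
    Globalization X :=
  let (Y, HY) := constructive_indefinite_description _ HX in
  let (p, Hp) := constructive_indefinite_description _ HY in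
  Build_Globalization Hp.

Definition glob_lift (X : PDatum M H) (Gl : Globalization X) (Z : Comod Δ ε)
    (q : Hom (cY Z) (pX X)) (Hq : MorIX (Y:=Z) (X:=X) q) : ComodHom Z (glob_comod Gl) :=
  proj1_sig (constructive_indefinite_description _ (proj2 (proj2 (glob_spec Gl)) Z q Hq)).

Lemma glob_lift_spec (X : PDatum M H) (Gl : Globalization X) (Z : Comod Δ ε)
    (q : Hom (cY Z) (pX X)) (Hq : MorIX (Y:=Z) (X:=X) q) :
  glob_proj Gl ∘ cf (glob_lift Gl Hq) = q.
Proof.
  exact (proj1 (proj2_sig
    (constructive_indefinite_description _ (proj2 (proj2 (glob_spec Gl)) Z q Hq)))).
Qed.

Lemma glob_lift_uniq (X : PDatum M H) (Gl : Globalization X) (Z : Comod Δ ε)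
    (q : Hom (cY Z) (pX X)) (Hq : MorIX (Y:=Z) (X:=X) q) (η : ComodHom Z (glob_comod Gl)) :
  glob_proj Gl ∘ cf η = q -> cf η = cf (glob_lift Gl Hq).
Proof.
  exact (proj2 (proj2_sig
    (constructive_indefinite_description _ (proj2 (proj2 (glob_spec Gl)) Z q Hq))) η).
Qed.

Definition chosen_glob (X : GlObj PO Δ ε) : Globalization X :=
  choose_globalization (gl_globalizable X).

Definition globalize (X : GlObj PO Δ ε) : Comod Δ ε := glob_comod (chosen_glob X).

Definition globalize_mor (X X' : GlObj PO Δ ε) (f : PHom X X') :
    ComodHom (globalize X) (globalize X') :=
  glob_lift (chosen_glob X') (MorIX_postcomp f (proj1 (glob_spec (chosen_glob X)))).

Definition globalize_counit (X : GlObj PO Δ ε) : PHom (Iobj (globalize X)) X :=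
  PHom_of_MorIX (proj1 (glob_spec (chosen_glob X))).

Lemma globalize_equalizer (X : GlObj PO Δ ε) :
  IsComEqualizer (coactXH Δ X) (eqPair1 X) (eqPair2 Δ X)
    (cofree_ext (glob_proj (chosen_glob X))).
Proof. apply globalization_is_equalizer, glob_spec. Qed.

Lemma globalize_mor_id (X : GlObj PO Δ ε) :
  cf (globalize_mor (pid X)) = idm (cY (globalize X)).
Proof.
  symmetry. apply glob_lift_uniq with (η := comod_id (globalize X)). cbn.
  rewrite comp_id_l. apply comp_id_r.
Qed.

Lemma globalize_mor_comp (X X' X'' : GlObj PO Δ ε) (g : PHom X' X'') (f : PHom X X') :
  cf (globalize_mor (pcomp g f)) = cf (globalize_mor g) ∘ cf (globalize_mor f).
Proof.
  symmetry. apply glob_lift_uniq with (η := comod_comp (globalize_mor g) (globalize_mor f)).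
  cbn [cf comod_comp pf pcomp]. unfold globalize_mor, globalize.
  rewrite comp_assoc, glob_lift_spec, <- comp_assoc, glob_lift_spec. apply comp_assoc.
Qed.

Lemma globalize_counit_nat (X X' : GlObj PO Δ ε) (f : PHom X X') :
  PHom_eq (pcomp (globalize_counit X') (Imor (globalize_mor f)))
    (pcomp f (globalize_counit X)).
Proof. apply PHom_of_MorIX_comp, glob_lift_spec. Qed.

Lemma globalize_counit_universal (X : GlObj PO Δ ε) (Y : Comod Δ ε)
    (f : PHom (Iobj Y) X) :
  exists g : ComodHom Y (globalize X),
    PHom_eq (pcomp (globalize_counit X) (Imor g)) f /\
    forall g' : ComodHom Y (globalize X),
      PHom_eq (pcomp (globalize_counit X) (Imor g')) f -> cf g' = cf g.
Proof.
  exists (glob_lift (chosen_glob X) (MorIX_of_PHom f)). split.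
  - apply PHom_of_MorIX_comp, glob_lift_spec.
  - intros g' [Hg' _]. exact (glob_lift_uniq _ Hg').
Qed.

End PartialComodules.

Theorem corollary3p8 (C : Category) (M : Monoidal C) (PO : Pushouts C) (H : C)
    (Δ : Hom H (tens M H H)) (ε : Hom H (unitO M)) (HC : IsCoalgebra Δ ε) :
  (* every global comodule I(Y) is a globalizable geometric partial comodule *)
  (forall Y : Comod Δ ε, Geometric PO Δ ε (Iobj Y) /\ Globalizable Δ ε (Iobj Y))
  /\
  (* I (hence its corestriction J to PCom^H_gl, a full subcategory) is fully faithful *)
  (forall Y Y' : Comod Δ ε,
     (forall g g' : ComodHom Y Y', PHom_eq (Imor g) (Imor g') -> cf g = cf g') /\
     (forall f : PHom (Iobj Y) (Iobj Y'), exists g : ComodHom Y Y', PHom_eq (Imor g) f))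
  /\
  (* a functor G : PCom^H_gl -> Com^H with G X = Y_X the equalizer, and J ⊣ G *)
  exists (G : GlObj PO Δ ε -> Comod Δ ε)
         (Gm : forall X X' : GlObj PO Δ ε, PHom X X' -> ComodHom (G X) (G X'))
         (κ : forall X : GlObj PO Δ ε, Hom (cY (G X)) (tens M (pX X) H))
         (cu : forall X : GlObj PO Δ ε, PHom (Iobj (G X)) X),
    (forall X : GlObj PO Δ ε,
       IsComEqualizer (coactXH Δ X) (eqPair1 X) (eqPair2 Δ X) (κ X)) /\
    (forall X : GlObj PO Δ ε, cf (Gm X X (pid X)) = idm (cY (G X))) /\
    (forall (X X' X'' : GlObj PO Δ ε) (g : PHom X' X'') (f : PHom X X'),
       cf (Gm X X'' (pcomp g f)) = cf (Gm X' X'' g) ∘ cf (Gm X X' f)) /\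
    (forall (X X' : GlObj PO Δ ε) (f : PHom X X'),
       PHom_eq (pcomp (cu X') (Imor (Gm X X' f))) (pcomp f (cu X))) /\
    (forall (X : GlObj PO Δ ε) (Y : Comod Δ ε) (f : PHom (Iobj Y) X),
       exists g : ComodHom Y (G X),
         PHom_eq (pcomp (cu X) (Imor g)) f /\
         forall g' : ComodHom Y (G X), PHom_eq (pcomp (cu X) (Imor g')) f -> cf g' = cf g).
Proof.
  destruct HC as [_ [counit_l _]].
  split; [|split].
  - intro Y. split; [apply Iobj_geometric | apply Iobj_globalizable].
  - intros Y Y'. split; [intros g g' [E _]; exact E | apply Iobj_full].
  - exists (@globalize C M PO H Δ ε), (@globalize_mor C M PO H Δ ε),
      (fun X => cofree_ext (glob_proj (chosen_glob X))), (@globalize_counit C M PO H Δ ε).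
    split; [|split; [|split; [|split]]].
    + apply (globalize_equalizer counit_l).
    + apply globalize_mor_id.
    + apply globalize_mor_comp.
    + apply globalize_counit_nat.
    + apply globalize_counit_universal.
Qed.
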